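(* Let $X\in\mathcal{P}^N$ and $\lambda\in\mathbb{C}^N$. (i) The integral $$\psi_\lambda(X)=\int_{\mathcal{T}(X)}e_\lambda(Y)\,e^{-\mathcal{F}(Y)}\prod_{1\le m<N}\mu_m(dY^m)$$ converges. (ii) The integrand $e_\lambda(Y)e^{-\mathcal{F}(Y)}$ vanishes as $Y\to\partial\mathcal{T}(X)$.
   Context: $\mathcal{P}$ is the space of positive definite $n\times n$ real symmetric matrices; $|X|=\det X$; $\mu(dX)=|X|^{-(n+1)/2}\prod_{1\le i\le j\le n}dx_{ij}$ and $\mu_m=\mu^{\otimes m}$ on $\mathcal{P}^m$. For $\nu\in\mathbb{C}$ and $X=(X_1,\dots,X_k)\in\mathcal{P}^k$, $e_\nu(X)=\prod_{i=1}^k|X_i|^{\nu}$. Let $\mathcal{T}=\mathcal{P}\times\mathcal{P}^2\times\cdots\times\mathcal{P}^N$, with elements $Y=(Y^1,\dots,Y^N)$, $Y^m=(Y^m_1,\dots,Y^m_m)\in\mathcal{P}^m$; for $X\in\mathcal{P}^N$, $\mathcal{T}(X)=\{Y\in\mathcal{T}:Y^N=X\}$, identified with $\mathcal{P}\times\cdots\times\mathcal{P}^{N-1}$. For $Y\in\mathcal{T}$, $\mathcal{F}(Y)=\sum_{1\le i\le m<N}\big(\mathrm{tr}[Y^m_i(Y^{m+1}_i)^{-1}]+\mathrm{tr}[Y^{m+1}_{i+1}(Y^m_i)^{-1}]\big)$, and for $\lambda\in\mathbb{C}^N$, $e_\lambda(Y)=e_{\lambda_1}(Y^1)\prod_{2\le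 m\le N}e_{\lambda_m}(Y^m)\,e_{-\lambda_m}(Y^{m-1})$. *)

From HB Require Import structures.
From mathcomp Require Import all_boot all_order all_algebra.
From mathcomp Require Import all_classical all_reals all_analysis.
From mathcomp Require Import complex.

Set Implicit Arguments.
Unset Strict Implicit.
Unset Printing Implicit Defensive.

Import Order.TTheory GRing.Theory Num.Theory.
Import numFieldNormedType.Exports.
Local Open Scope ring_scope.

Section GT.
Variable R : realType.

Definition posdef (n : nat) (A : 'M[R]_n) : Prop :=
  A^T = A /\ forall x : 'rV[R]_n, x != 0 -> 0 < (x *m A *m x^T) 0 0.

(* Complex power x^nu := exp(nu log x) for x > 0 (principal branch). *)
Local Open Scope complex_scope.
Definition cpow (x : R) (nu : R[i]) : R[i] :=
  (expR (complex.Re nu * ln x) * cos (complex.Im nu * ln x)) +i*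
  (expR (complex.Re nu * ln x) * sin (complex.Im nu * ln x)).
Local Close Scope complex_scope.

(* Iterated Lebesgue integral over R^J (J a finite index type) of a        *)
(* nonnegative extended-real function: integrate coordinate by coordinate  *)
(* in the order of enum J.  For nonnegative measurable functions this is   *)
(* the Lebesgue integral w.r.t. Lebesgue measure on R^J (Tonelli).         *)
Fixpoint iterint (J : eqType) (s : seq J) (f : (J -> R) -> \bar R)
    (v : J -> R) : \bar R :=
  match s with
  | [::] => f v
  | j :: s' => (\int[@lebesgue_measure R]_(x in [set: R])
                  iterint s' f (fun k => if k == j then x else v k))%E
  end.

Definition lebesgue_integral_fin (J : finType) (f : (J -> R) -> \bar R) :
  \bar R := iterint (enum J) f (fun _ => 0).

(* Coordinates on T(X) = P x P^2 x ... x P^(N-1).                           *)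
(* A free vertex Y^m_i (1 <= i <= m < N) is indexed by the pair             *)
(* (m-1, i-1) of ordinals in 'I_N with i-1 <= m-1 and m < N.               *)
Definition LvIdx (N : nat) :=
  {p : 'I_N * 'I_N | (p.2 <= p.1)%N && (p.1.+1 < N)%N}.
Definition EIdx (n : nat) := {q : 'I_n * 'I_n | (q.1 <= q.2)%N}.
(* A point of T(X) is given by the upper-triangular entries x_ab (a <= b)  *)
(* of all the matrices Y^m_i, 1 <= i <= m < N.                             *)
Definition gtcoord (N n : nat) := (LvIdx N * EIdx n)%type.

Lemma sidx_proof (n : nat) (a b : 'I_n) : (a <= b)%N = false -> (b <= a)%N.
Proof. by move=> h; apply: ltnW; rewrite ltnNge h. Qed.

Definition sidx (n : nat) (a b : 'I_n) : EIdx n :=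
  match (a <= b)%N as c return (a <= b)%N = c -> EIdx n with
  | true => fun h => exist _ (a, b) h
  | false => fun h => exist (fun q : 'I_n * 'I_n => (q.1 <= q.2)%N)
                        (b, a) (sidx_proof h)
  end erefl.

Variables (N n : nat).

Definition Ymat (w : gtcoord N n -> R) (k : LvIdx N) : 'M[R]_n :=
  \matrix_(a, b) w (k, sidx a b).

Definition inT (w : gtcoord N n -> R) : Prop := forall k, posdef (Ymat w k).

(* Vertex Y^m_i of the whole pattern (1-based m, i), with Y^N = X.          *)
Definition node (X : 'I_N -> 'M[R]_n) (w : gtcoord N n -> R) (m i : nat) :
    'M[R]_n :=
  if m == N then
    (if (insub i.-1 : option 'I_N) is Some j then X j else 0)
  else
    match (insub m.-1 : option 'I_N), (insub i.-1 : option 'I_N) with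
    | Some m', Some i' =>
        if (insub (m', i') : option (LvIdx N)) is Some k then Ymat w k else 0
    | _, _ => 0
    end.

Definition energy (X : 'I_N -> 'M[R]_n) (w : gtcoord N n -> R) : R :=
  \sum_(1 <= m < N) \sum_(1 <= i < m.+1)
     (\tr (node X w m i *m invmx (node X w m.+1 i))
      + \tr (node X w m.+1 i.+1 *m invmx (node X w m i))).

Definition e_level (X : 'I_N -> 'M[R]_n) (w : gtcoord N n -> R) (m : nat)
    (nu : R[i]) : R[i] :=
  \prod_(1 <= i < m.+1) cpow (\det (node X w m i)) nu.

Definition lamn (lam : 'I_N -> R[i]) (m : nat) : R[i] :=
  if (insub m.-1 : option 'I_N) is Some j then lam j else 0.

Definition e_lambda (X : 'I_N -> 'M[R]_n) (lam : 'I_N -> R[i])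
    (w : gtcoord N n -> R) : R[i] :=
  e_level X w 1 (lamn lam 1) *
  \prod_(2 <= m < N.+1)
     (e_level X w m (lamn lam m) * e_level X w m.-1 (- lamn lam m)).

Definition gt_integrand (X : 'I_N -> 'M[R]_n) (lam : 'I_N -> R[i])
    (w : gtcoord N n -> R) : R[i] :=
  e_lambda X lam w * Complex (expR (- energy X w)) 0.

(* density of prod_{m<N} mu_m w.r.t. Lebesgue measure on the coordinates *)
Definition mu_density (w : gtcoord N n -> R) : R :=
  \prod_(k : LvIdx N) (\det (Ymat w k)) `^ (- ((n%:R + 1) / 2)).

Definition abs_integrand (X : 'I_N -> 'M[R]_n) (lam : 'I_N -> R[i])
    (w : gtcoord N n -> R) : R :=
  if `[< inT w >] then
    ComplexField.Normc.normc (gt_integrand X lam w) * mu_density w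
  else 0.

End GT.

Definition gtspace (R : realType) (N n : nat) : topologicalType :=
  @prod_topology (gtcoord N n) (fun _ => (R : topologicalType)).

From mathcomp Require Import all_boot all_order all_algebra.
From mathcomp Require Import all_classical all_reals all_analysis.
From mathcomp Require Import complex.
From mathcomp Require Import perm ring lra measurable_realfun.

Set Implicit Arguments.
Unset Strict Implicit.
Unset Printing Implicit Defensive.

Import Order.TTheory GRing.Theory Num.Theory.
Import numFieldNormedType.Exports.
Local Open Scope ring_scope.

(* Along every edge of the pattern the energy F dominates tr (A B^-1), and for
   positive definite A, B one has tr A <= tr (A B^-1) tr B.  Descending from
   Y^N = X, the traces of each Y^m_i and of its inverse are therefore at most
   C max(1, F)^N, so |ln |Y^m_i|| = O(ln max(1, F)).  Consequently |e_lambda|,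
   the density of the measures mu_m and every factor 1 + y^2 of a coordinate y
   grow at most polynomially in max(1, F), and e^-F beats them: the integrand
   is O(e^-F/2).  Outside the compact set where all Y^m_i and their inverses
   have bounded trace, F is large, which gives (ii).  The integrand times the
   product of the 1 + y^2 stays bounded, so it is dominated by a multiple of
   the product of Cauchy densities, which gives (i). *)

Section PsdMatrix.
Variables (R : rcfType) (n : nat).
Implicit Types (A B C V : 'M[R]_n) (x y : 'rV[R]_n).

Definition bform A x y := (x *m A *m y^T) 0 0.
Definition sqnorm x := (x *m x^T) 0 0.
Definition psdmx A := A^T = A /\ forall x, 0 <= bform A x x.

Lemma mx11_trmx (a : 'M[R]_1) : a^T 0 0 = a 0 0.
Proof. by rewrite mxE. Qed.

Lemma mx11_mul (a b : 'M[R]_1) : (a *m b) 0 0 = a 0 0 * b 0 0.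
Proof. by rewrite mxE big_ord1. Qed.

Lemma bformC A x y : A^T = A -> bform A x y = bform A y x.
Proof. by move=> sA; rewrite /bform -mx11_trmx !trmx_mul trmxK sA mulmxA. Qed.

Lemma bformDl A x y z : bform A (x + y) z = bform A x z + bform A y z.
Proof. by rewrite /bform !mulmxDl mxE. Qed.

Lemma bformDr A x y z : bform A z (x + y) = bform A z x + bform A z y.
Proof. by rewrite /bform linearD /= mulmxDr mxE. Qed.

Lemma bformZl A t x z : bform A (t *: x) z = t * bform A x z.
Proof. by rewrite /bform -!scalemxAl mxE. Qed.

Lemma bformZr A t x z : bform A z (t *: x) = t * bform A z x.
Proof. by rewrite /bform linearZ /= -scalemxAr mxE. Qed.

Lemma bformBm A B x y : bform (A - B) x y = bform A x y - bform B x y.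
Proof. by rewrite /bform mulmxBr mulmxBl !mxE. Qed.

Lemma bform_delta A i j : bform A (delta_mx 0 i) (delta_mx 0 j) = A i j.
Proof. by rewrite /bform -rowE trmx_delta -colE !mxE. Qed.

Lemma bform_mulmx A V x y : bform A (x *m V) (y *m V) = bform (V *m A *m V^T) x y.
Proof. by rewrite /bform trmx_mul !mulmxA. Qed.

Lemma bform_gram V x : bform (V^T *m V) x x = sqnorm (x *m V^T).
Proof. by rewrite /bform /sqnorm trmx_mul trmxK !mulmxA. Qed.

Lemma bform_outer (u : 'rV[R]_n) x : bform (u^T *m u) x x = (x *m u^T) 0 0 ^+ 2.
Proof.
rewrite /bform -[x *m _ *m _]mulmxA !mulmxA -mulmxA mx11_mul expr2.
by rewrite -[(u *m x^T) 0 0]mx11_trmx trmx_mul trmxK.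
Qed.

Lemma sqnorm_bform x : sqnorm x = bform 1%:M x x.
Proof. by rewrite /bform mulmx1. Qed.

Lemma sqnormE x : sqnorm x = \sum_i x 0 i ^+ 2.
Proof. by rewrite /sqnorm mxE; apply: eq_bigr => i _; rewrite mxE expr2. Qed.

Lemma sqnorm_ge0 x : 0 <= sqnorm x.
Proof. by rewrite sqnormE sumr_ge0 // => i _; apply: sqr_ge0. Qed.

Lemma sqnorm_gt0 x : x != 0 -> 0 < sqnorm x.
Proof.
move=> xn; rewrite lt_def sqnorm_ge0 andbT; apply: contraNneq xn.
rewrite sqnormE => /eqP; rewrite psumr_eq0 => [/allP x0|i _]; last exact: sqr_ge0.
apply/eqP/matrixP => i j; rewrite ord1 mxE.
by have := x0 j (mem_index_enum j); rewrite sqrf_eq0 => /eqP.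
Qed.

Lemma psdmx1 : psdmx 1%:M.
Proof. by split=> [|x]; rewrite ?trmx1 // -sqnorm_bform sqnorm_ge0. Qed.

Lemma psdmx_CauchySchwarz A x y : psdmx A ->
  bform A x y ^+ 2 <= bform A x x * bform A y y.
Proof.
move=> [sA pA].
set p := bform A x x; set q := bform A y y; set b := bform A x y.
have quad t : 0 <= p + 2 * t * b + t ^+ 2 * q.
  suff <- : bform A (x + t *: y) (x + t *: y) = p + 2 * t * b + t ^+ 2 * q by [].
  rewrite !(bformDl, bformDr, bformZl, bformZr) /p /q /b (bformC x y sA); ring.
have [q0 p0] : 0 <= q /\ 0 <= p by split; apply: pA.
have [qe|qn] := eqVneq q 0.
  rewrite qe mulr0; have [->|bn] := eqVneq b 0; first by rewrite expr0n.
  have := quad (- (p + 1) / (2 * b)); rewrite qe mulr0 addr0.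
  have -> : 2 * (- (p + 1) / (2 * b)) * b = - (p + 1) by field.
  lra.
have qp : 0 < q by rewrite lt_def qn.
have := quad (- b / q).
have -> : p + 2 * (- b / q) * b + (- b / q) ^+ 2 * q = (p * q - b ^+ 2) / q.
  by field.
by rewrite pmulr_lge0 ?invr_gt0 // subr_ge0 mulrC.
Qed.

Lemma psdmx_diag_ge0 A i : psdmx A -> 0 <= A i i.
Proof. by move=> [_ pA]; rewrite -bform_delta pA. Qed.

Lemma psdmx_row0 A i : psdmx A -> A i i = 0 -> row i A = 0.
Proof.
move=> pA Aii; apply/matrixP => k j; rewrite ord1 !mxE.
have := psdmx_CauchySchwarz (delta_mx 0 i) (delta_mx 0 j) pA.
rewrite !bform_delta Aii mul0r => h.
by apply/eqP; rewrite -sqrf_eq0 eq_le h sqr_ge0.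
Qed.

(* One step of a Cholesky factorisation, with u := row i A / sqrt (A i i). *)
Lemma psdmx_peel_row A i : psdmx A -> 0 < A i i -> exists u : 'rV[R]_n,
  [/\ psdmx (A - u^T *m u), row i (A - u^T *m u) = 0 &
      forall j, row j A = 0 -> row j (A - u^T *m u) = 0].
Proof.
move=> pA Aii; have [sA _] := pA.
have Asym j k : A j k = A k j by rewrite -[in LHS]sA mxE.
set s := Num.sqrt (A i i).
have s2 : s ^+ 2 = A i i by rewrite sqr_sqrtr // ltW.
have s0 : s != 0 by rewrite sqrtr_eq0 -ltNge.
have Ai0 : A i i != 0 by rewrite gt_eqF.
pose u := s^-1 *: row i A.
exists u; split.
- split; first by rewrite linearB /= sA trmx_mul trmxK.
  move=> x; rewrite bformBm bform_outer subr_ge0.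
  have -> : (x *m u^T) 0 0 = s^-1 * bform A x (delta_mx 0 i).
    rewrite /bform linearZ /= -scalemxAr mxE; congr (_ * _).
    by rewrite rowE trmx_mul trmx_delta sA mulmxA.
  rewrite exprMn exprVn ler_pdivrMl; last by rewrite s2.
  have := psdmx_CauchySchwarz x (delta_mx 0 i) pA.
  by rewrite bform_delta -s2 mulrC.
- by apply/matrixP => z k; rewrite ord1 !mxE big_ord1 !mxE -s2; field.
- move=> j /matrixP Aj; apply/matrixP => z k; rewrite ord1 !mxE big_ord1 !mxE.
  have := Aj 0 k; have := Aj 0 i; rewrite !mxE Asym => -> ->.
  by rewrite mulr0 mul0r subr0.
Qed.

Lemma gram_add_row V (u : 'rV[R]_n) i : row i V = 0 ->
  (V + delta_mx i 0 *m u)^T *m (V + delta_mx i 0 *m u) = V^T *m V + u^T *m u.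
Proof.
move=> Vi0; set D := delta_mx i 0 *m u.
have VD : V^T *m D = 0 by rewrite /D mulmxA -colE -tr_row Vi0 trmx0 mul0mx.
have DD : D^T *m D = u^T *m u.
  have d1 : delta_mx 0 0 = 1%:M :> 'M[R]_1.
    by apply/matrixP => a b; rewrite !mxE !ord1.
  by rewrite /D trmx_mul trmx_delta -mulmxA (mulmxA (delta_mx 0 i))
    mul_delta_mx d1 mul1mx.
rewrite [(V + D)^T]linearD /= mulmxDl !mulmxDr VD.
by rewrite -[D^T *m V]trmxK trmx_mul trmxK VD trmx0 DD addr0 add0r.
Qed.

Lemma psdmx_factor_rows r A : psdmx A ->
    (forall j : 'I_n, (r <= j)%N -> row j A = 0) ->
  exists V, A = V^T *m V /\ forall j : 'I_n, (r <= j)%N -> row j V = 0.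
Proof.
elim: r A => [|r IH] A pA A0.
  have -> : A = 0.
    by apply/matrixP => j k; have /matrixP/(_ 0 k) := A0 j isT; rewrite !mxE.
  by exists 0; split=> [|j _]; rewrite ?mulmx0 ?row0.
have [rn|nr] := ltnP r n; last first.
  have [|V [AV V0]] := IH A pA.
    by move=> j rj; have := leq_trans (ltn_ord j) nr; rewrite ltnNge rj.
  by exists V; split=> // j /ltnW; apply: V0.
pose i := Ordinal rn.
have geS (j : 'I_n) : (r <= j)%N -> j = i \/ (r < j)%N.
  rewrite leq_eqVlt => /orP[/eqP rj|]; last by right.
  by left; apply: val_inj; rewrite /= -rj.
have := psdmx_diag_ge0 i pA; rewrite le_eqVlt => /orP[/eqP/esym Aii0|Aii_gt0].
  have [|V [AV V0]] := IH A pA.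
    by move=> j /geS[->|]; [apply: psdmx_row0 | apply: A0].
  by exists V; split=> // j /ltnW; apply: V0.
have [u [pB Bi Bj]] := psdmx_peel_row pA Aii_gt0.
have [|W [BW W0]] := IH _ pB.
  by move=> j /geS[->|/A0/Bj].
exists (W + delta_mx i 0 *m u); split.
  by rewrite gram_add_row ?W0 // -BW subrK.
move=> j rj; apply/matrixP => z k; rewrite ord1 !mxE big_ord1 !mxE.
have /matrixP/(_ 0 k) := W0 j (ltnW rj); rewrite !mxE => ->.
have /negbTE-> : j != i by apply: contraTneq rj => ->; rewrite ltnn.
by rewrite mul0r addr0.
Qed.

Lemma psdmx_factor A : psdmx A -> exists V, A = V^T *m V.
Proof.
move=> pA; have [|V [AV _]] := psdmx_factor_rows pA (r := n).
  by move=> j; rewrite leqNgt ltn_ord.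
by exists V.
Qed.

Lemma mxtrace_gram_mul V C :
  \tr (V^T *m V *m C) = \sum_k bform C (row k V) (row k V).
Proof.
rewrite -mulmxA mxtrace_mulC; apply: eq_bigr => k _.
by rewrite !rowE bform_mulmx bform_delta.
Qed.

Lemma mxtrace_gram V : \tr (V^T *m V) = \sum_k sqnorm (row k V).
Proof.
rewrite -[V^T *m V]mulmx1 mxtrace_gram_mul.
by apply: eq_bigr => k _; rewrite sqnorm_bform.
Qed.

Lemma psdmx_trace_ge0 A : psdmx A -> 0 <= \tr A.
Proof. by move=> pA; apply: sumr_ge0 => i _; apply: psdmx_diag_ge0. Qed.

Lemma psdmx_det_ge0 A : psdmx A -> 0 <= \det A.
Proof.
by move=> /psdmx_factor[V ->]; rewrite det_mulmx det_tr -expr2 sqr_ge0.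
Qed.

Lemma psdmx_mxtrace_mul_ge0 A C : psdmx A -> psdmx C -> 0 <= \tr (A *m C).
Proof.
move=> /psdmx_factor[V ->] [_ pC].
by rewrite mxtrace_gram_mul sumr_ge0 // => k _; apply: pC.
Qed.

Lemma psdmx_invmx A : psdmx A -> A \in unitmx -> psdmx (invmx A).
Proof.
move=> [sA pA] uA; split=> [|x]; first by rewrite trmx_inv sA.
by have := pA (x *m invmx A); rewrite bform_mulmx trmx_inv sA mulVmx // mul1mx.
Qed.

Lemma bform_le_trace B x : psdmx B -> bform B x x <= \tr B * sqnorm x.
Proof.
move=> /psdmx_factor[W ->].
rewrite bform_gram mxtrace_gram sqnormE mulr_suml; apply: ler_sum => k _.
have -> : (x *m W^T) 0 k = bform 1%:M x (row k W).
  by rewrite /bform mulmx1 !mxE; apply: eq_bigr => i _; rewrite !mxE.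
by rewrite mulrC !sqnorm_bform; apply: psdmx_CauchySchwarz; apply: psdmx1.
Qed.

Lemma sqnorm_le_trace_invform B x : psdmx B -> B \in unitmx ->
  sqnorm x <= \tr B * bform (invmx B) x x.
Proof.
move=> pB uB; have pC := psdmx_invmx pB uB; have [sB _] := pB.
have := psdmx_CauchySchwarz x (x *m B) pC.
have -> : bform (invmx B) x (x *m B) = sqnorm x.
  by rewrite /bform /sqnorm trmx_mul sB mulmxA -(mulmxA x) mulVmx // mulmx1.
rewrite bform_mulmx mulmxV // mul1mx sB => CS.
have q0 : 0 <= bform (invmx B) x x by case: pC.
have [->|nz] := eqVneq (sqnorm x) 0; first by rewrite mulr_ge0 ?psdmx_trace_ge0.
have np : 0 < sqnorm x by rewrite lt_def nz sqnorm_ge0.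
have : sqnorm x ^+ 2 <= bform (invmx B) x x * (\tr B * sqnorm x).
  exact: le_trans CS (ler_wpM2l q0 (bform_le_trace x pB)).
by rewrite expr2 mulrA [_ * \tr B]mulrC ler_pM2r.
Qed.

Lemma mxtrace_le_mul_invmx A B : psdmx A -> psdmx B -> B \in unitmx ->
  \tr A <= \tr (A *m invmx B) * \tr B.
Proof.
move=> /psdmx_factor[V ->] pB uB.
rewrite mxtrace_gram mxtrace_gram_mul mulr_suml; apply: ler_sum => k _.
by rewrite mulrC sqnorm_le_trace_invform.
Qed.

Lemma mxtrace_invmx_le_mul A B : psdmx A -> A \in unitmx ->
    psdmx B -> B \in unitmx ->
  \tr (invmx B) <= \tr (A *m invmx B) * \tr (invmx A).
Proof.
move=> pA uA pB uB; rewrite mxtrace_mulC -[X in _ *m X](invmxK A).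
by apply: mxtrace_le_mul_invmx; try apply: psdmx_invmx; rewrite ?unitmx_inv.
Qed.

Lemma psdmx_diag_le_trace A i : psdmx A -> A i i <= \tr A.
Proof.
move=> pA; rewrite /mxtrace (bigD1 i) //= lerDl.
by apply: sumr_ge0 => j _; apply: psdmx_diag_ge0.
Qed.

Lemma psdmx_entry_le_trace A i j : psdmx A -> `|A i j| <= \tr A.
Proof.
move=> pA; have := psdmx_CauchySchwarz (delta_mx 0 i) (delta_mx 0 j) pA.
rewrite !bform_delta -real_normK ?num_real // => CS.
have hi := psdmx_diag_le_trace i pA; have hj := psdmx_diag_le_trace j pA.
have gi := psdmx_diag_ge0 i pA; have gj := psdmx_diag_ge0 j pA.
have := normr_ge0 (A i j); nra.
Qed.

Lemma psdmx_det_le A : psdmx A -> `|\det A| <= n`!%:R * \tr A ^+ n.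
Proof.
move=> pA; apply: le_trans (ler_norm_sum _ _ _) _.
rewrite mulr_natl -card_Sn -sumr_const; apply: ler_sum => s _.
rewrite normrM normr_sign mul1r normr_prod.
rewrite -[in X in _ ^+ X](card_ord n) -prodr_const.
by apply: ler_prod => i _; rewrite normr_ge0 psdmx_entry_le_trace.
Qed.

End PsdMatrix.

Section Posdef.
Variables (R : realType) (n : nat).
Implicit Types A : 'M[R]_n.

Lemma posdef_psdmx A : posdef A -> psdmx A.
Proof.
move=> [sA pA]; split=> // x.
have [->|xn] := eqVneq x 0; last exact: ltW (pA x xn).
by rewrite /bform !mul0mx mxE.
Qed.

Lemma posdef_unitmx A : posdef A -> A \in unitmx.
Proof.
move=> [_ pA]; rewrite unitmxE unitfE; apply/negP => /det0P[v vn vA].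
by have := pA v vn; rewrite vA mul0mx mxE ltxx.
Qed.

Lemma posdef_invmx A : posdef A -> posdef (invmx A).
Proof.
move=> pdA; have uA := posdef_unitmx pdA; have [sA pA] := pdA.
split=> [|x xn]; first by rewrite trmx_inv sA.
have xA : x *m invmx A != 0.
  by apply: contraNneq xn => h; rewrite -(mulmxKV uA x) h mul0mx.
by have := pA _ xA; rewrite trmx_mul trmx_inv sA !mulmxA mulmxKV.
Qed.

Lemma posdef_det_gt0 A : posdef A -> 0 < \det A.
Proof.
move=> pdA; have d0 := psdmx_det_ge0 (posdef_psdmx pdA).
by rewrite lt_def d0 andbT -unitfE -unitmxE posdef_unitmx.
Qed.

Lemma posdef_ln_det_le A M : posdef A -> \tr A <= M -> \tr (invmx A) <= M ->
  1 <= M -> `|ln (\det A)| <= ln n`!%:R + n%:R * ln M.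
Proof.
move=> pdA tA tAi M1; have M0 : 0 < M by apply: lt_le_trans M1.
have nf0 : (0 : R) < n`!%:R by rewrite ltr0n fact_gt0.
have ln_det_le (B : 'M[R]_n) : posdef B -> \tr B <= M ->
    ln (\det B) <= ln n`!%:R + n%:R * ln M.
  move=> pdB tB; have dB := posdef_det_gt0 pdB; have pB := posdef_psdmx pdB.
  rewrite mulr_natl -lnXn // -lnM ?posrE ?exprn_gt0 //.
  rewrite ler_ln ?posrE ?mulr_gt0 ?exprn_gt0 //.
  apply: le_trans (ler_norm _) (le_trans (psdmx_det_le pB) _).
  apply: ler_wpM2l; first exact: ltW.
  by apply: lerXn2r; rewrite ?nnegrE ?psdmx_trace_ge0 // ltW.
apply/ler_normlP; split; last exact: ln_det_le.
have := ln_det_le _ (posdef_invmx pdA) tAi.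
by rewrite det_inv lnV ?posrE ?posdef_det_gt0 // lerNl.
Qed.

End Posdef.

Lemma ler_sum_nat_term (R : numDomainType) (F : nat -> R) a b j :
    (a <= j < b)%N -> (forall m, (a <= m < b)%N -> 0 <= F m) ->
  F j <= \sum_(a <= m < b) F m.
Proof.
move=> hj F0; rewrite (bigD1_seq j) ?mem_index_iota ?iota_uniq //= lerDl.
by rewrite big_seq_cond sumr_ge0 // => m /andP[/[!mem_index_iota]/F0].
Qed.

Section Pattern.
Variables (R : realType) (N n : nat).
Implicit Types (w : gtcoord N n -> R) (k : LvIdx N).

Lemma val_sidx (a b : 'I_n) :
  val (sidx a b) = if (a <= b)%N then (a, b) else (b, a).
Proof.
rewrite /sidx; move: (@erefl _ (a <= b)%N).
by case: {2 3}(a <= b)%N => e; rewrite /= e.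
Qed.

Lemma sidx_val (e : EIdx n) : sidx (val e).1 (val e).2 = e.
Proof. by apply: val_inj; rewrite val_sidx; case: e => [[a b] /= ->]. Qed.

Lemma sidxC (a b : 'I_n) : sidx a b = sidx b a.
Proof.
apply: val_inj; rewrite !val_sidx.
by case: (ltngtP a b) => // /val_inj->.
Qed.

Lemma trmx_Ymat w k : (Ymat w k)^T = Ymat w k.
Proof. by apply/matrixP => a b; rewrite !mxE sidxC. Qed.

Lemma Ymat_entry w (c : gtcoord N n) : w c = Ymat w c.1 (val c.2).1 (val c.2).2.
Proof. by case: c => k e; rewrite mxE sidx_val. Qed.

Lemma LvIdx_gt1 k : (1 < N)%N.
Proof. by case: k => [[a b] /andP[_ aN]]; apply: leq_ltn_trans aN. Qed.

Variable X : 'I_N -> 'M[R]_n.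

Lemma node_top w i (iN : (i.-1 < N)%N) : node X w N i = X (Ordinal iN).
Proof. by rewrite /node eqxx insubT. Qed.

Lemma node_Ymat w k : node X w (val k).1.+1 (val k).2.+1 = Ymat w k.
Proof.
case: k => [[a b] hk] /=; have /andP[_ aN] := hk.
rewrite /node ifN_eq; last by rewrite neq_ltn aN.
rewrite /= !valK.
by rewrite (insubT (fun p : 'I_N * 'I_N => (p.2 <= p.1) && (p.1.+1 < N))%N hk).
Qed.

Hypothesis pdX : forall j, posdef (X j).

Lemma posdef_node w m i : inT w -> (0 < i <= m)%N -> (m <= N)%N ->
  posdef (node X w m i).
Proof.
move=> Hw /andP[i0 im] mN.
have iN : (i.-1 < N)%N by rewrite prednK // (leq_trans im mN).
have [->|mn] := eqVneq m N; first by rewrite node_top.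
have mN' : (m < N)%N by rewrite ltn_neqAle mn mN.
have m0 : (0 < m)%N by apply: leq_trans im.
have mN'' : (m.-1 < N)%N by rewrite prednK.
have hk : ((Ordinal iN : 'I_N) <= (Ordinal mN'' : 'I_N))%N
          && ((Ordinal mN'' : 'I_N).+1 < N)%N.
  by rewrite /= prednK // mN' andbT -ltnS !prednK.
have := node_Ymat w (exist _ (Ordinal mN'', Ordinal iN) hk).
by rewrite /= !prednK // => ->; apply: Hw.
Qed.

Lemma posdef_triangle w m i : inT w -> (0 < i <= m)%N -> (m < N)%N ->
  [/\ posdef (node X w m i), posdef (node X w m.+1 i) &
      posdef (node X w m.+1 i.+1)].
Proof.
move=> Hw /andP[i0 im] mN; split; apply: posdef_node => //; rewrite ?i0 //=.
  exact: ltnW.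
exact: leqW.
Qed.

Definition energy_term1 w m i := \tr (node X w m i *m invmx (node X w m.+1 i)).
Definition energy_term2 w m i := \tr (node X w m.+1 i.+1 *m invmx (node X w m i)).

Lemma energy_terms_ge0 w m i : inT w -> (0 < i <= m)%N -> (m < N)%N ->
  0 <= energy_term1 w m i /\ 0 <= energy_term2 w m i.
Proof.
move=> Hw im mN; have [pA pB pC] := posdef_triangle Hw im mN.
by split; apply: psdmx_mxtrace_mul_ge0; apply: posdef_psdmx => //;
  apply: posdef_invmx.
Qed.

Lemma energy_ge0 w : inT w -> 0 <= energy X w.
Proof.
move=> Hw; rewrite /energy big_seq sumr_ge0 // => m.
rewrite mem_index_iota => /andP[_ mN].
rewrite big_seq sumr_ge0 // => i /[!mem_index_iota] im.
by have [? ?] := energy_terms_ge0 Hw im mN; apply: addr_ge0.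
Qed.

Lemma energy_terms_le w m i : inT w -> (0 < i <= m)%N -> (m < N)%N ->
  energy_term1 w m i <= energy X w /\ energy_term2 w m i <= energy X w.
Proof.
move=> Hw im mN; have [i0 _] := andP im.
have [t1 t2] := energy_terms_ge0 Hw im mN.
suff : energy_term1 w m i + energy_term2 w m i <= energy X w.
  by move=> h; split; apply: le_trans h; rewrite ?lerDl ?lerDr.
apply: le_trans (ler_sum_nat_term (j := m) _ _) => //.
- apply: (ler_sum_nat_term
    (F := fun i => energy_term1 w m i + energy_term2 w m i)).
    by rewrite i0 ltnS; case/andP: im.
  by move=> i' i'm; have [? ?] := energy_terms_ge0 Hw i'm mN; apply: addr_ge0.
- by rewrite mN (leq_trans i0); case/andP: im.
- move=> m' /andP[_ m'N]; rewrite big_seq sumr_ge0 // => i'.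
  rewrite mem_index_iota => i'm.
  by have [? ?] := energy_terms_ge0 Hw i'm m'N; apply: addr_ge0.
Qed.

Definition top_bound := 1 + \sum_j (\tr (X j) + \tr (invmx (X j))).
Definition energy1 w := Num.max 1 (energy X w).
Definition trace_bound w := top_bound * energy1 w ^+ N.

Lemma energy1_ge1 w : 1 <= energy1 w.
Proof. by rewrite le_max lexx. Qed.

Lemma energy_le1 w : energy X w <= energy1 w.
Proof. by rewrite le_max lexx orbT. Qed.

Lemma traces_top_ge0 j : 0 <= \tr (X j) /\ 0 <= \tr (invmx (X j)).
Proof.
by split; apply/psdmx_trace_ge0/posdef_psdmx; last apply: posdef_invmx.
Qed.

Lemma traces_top_le j : \tr (X j) <= top_bound /\ \tr (invmx (X j)) <= top_bound.
Proof.
have [t1 t2] := traces_top_ge0 j.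
suff : \tr (X j) + \tr (invmx (X j)) <= top_bound.
  by move=> h; split; apply: le_trans h; rewrite ?lerDl ?lerDr.
rewrite /top_bound (bigD1 j) //= addrCA lerDl addr_ge0 // sumr_ge0 // => k _.
by have [? ?] := traces_top_ge0 k; apply: addr_ge0.
Qed.

Lemma top_bound_ge1 : 1 <= top_bound.
Proof.
rewrite lerDl sumr_ge0 // => j _.
by have [? ?] := traces_top_ge0 j; apply: addr_ge0.
Qed.

Lemma trace_bound_ge1 w : 1 <= trace_bound w.
Proof.
by rewrite -[1](mulr1 1) ler_pM ?top_bound_ge1 ?exprn_ege1 ?energy1_ge1.
Qed.

(* Each step down the pattern uses the trace inequalities on the triangle
   Y^m_i, Y^m+1_i, Y^m+1_i+1 and costs one factor energy1 w. *)
Lemma node_trace_le_pow w d m i : inT w -> (m + d = N)%N -> (0 < i <= m)%N ->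
  \tr (node X w m i) <= top_bound * energy1 w ^+ d /\
  \tr (invmx (node X w m i)) <= top_bound * energy1 w ^+ d.
Proof.
move=> Hw; elim: d m i => [|d IH] m i md im.
  rewrite addn0 in md; subst m; have [i0 iN] := andP im.
  have iN' : (i.-1 < N)%N by rewrite prednK.
  by rewrite (node_top _ iN') expr0 mulr1; apply: traces_top_le.
have mN : (m < N)%N by rewrite -md addnS ltnS leq_addr.
have md' : (m.+1 + d = N)%N by rewrite addSnnS.
have [i0 il] := andP im.
have im1 : (0 < i <= m.+1)%N by rewrite i0 leqW.
have im2 : (0 < i.+1 <= m.+1)%N by rewrite ltnS.
have [[IH1 _] [_ IH2]] := (IH m.+1 i md' im1, IH m.+1 i.+1 md' im2).
have [e1 e2] := energy_terms_le Hw im mN.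
have [g1 g2] := energy_terms_ge0 Hw im mN.
have [pA pB pC] := posdef_triangle Hw im mN.
have [uB uA] := (posdef_unitmx pB, posdef_unitmx pA).
rewrite exprS mulrCA; split.
- apply: le_trans (mxtrace_le_mul_invmx (posdef_psdmx pA) (posdef_psdmx pB) uB) _.
  apply: ler_pM => //; first exact: psdmx_trace_ge0 (posdef_psdmx pB).
  exact: le_trans e1 (energy_le1 w).
- apply: le_trans (mxtrace_invmx_le_mul (posdef_psdmx pC) (posdef_unitmx pC)
    (posdef_psdmx pA) uA) _.
  apply: ler_pM => //; first exact/psdmx_trace_ge0/posdef_psdmx/posdef_invmx.
  exact: le_trans e2 (energy_le1 w).
Qed.

Lemma node_trace_le w m i : inT w -> (0 < i <= m)%N -> (m <= N)%N ->
  \tr (node X w m i) <= trace_bound w /\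
  \tr (invmx (node X w m i)) <= trace_bound w.
Proof.
move=> Hw im mN; have [h1 h2] := node_trace_le_pow Hw (subnKC mN) im.
suff le : top_bound * energy1 w ^+ (N - m) <= trace_bound w.
  by split; apply: le_trans le.
apply: ler_wpM2l; first exact: le_trans ler01 top_bound_ge1.
by apply: ler_weXn2l; [exact: energy1_ge1 | exact: leq_subr].
Qed.

Lemma Ymat_trace_le w k : inT w ->
  \tr (Ymat w k) <= trace_bound w /\ \tr (invmx (Ymat w k)) <= trace_bound w.
Proof.
move=> Hw; rewrite -node_Ymat; case: k => [[a b] /andP[ba aN]] /=.
by apply: node_trace_le => //; apply: ltnW.
Qed.

Lemma coord_le w c : inT w -> `|w c| <= trace_bound w.
Proof.
move=> Hw; rewrite Ymat_entry; apply: le_trans (Ymat_trace_le c.1 Hw).1.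
exact/psdmx_entry_le_trace/posdef_psdmx.
Qed.

Lemma ln_trace_bound w :
  ln (trace_bound w) = ln top_bound + N%:R * ln (energy1 w).
Proof.
have G0 : 0 < energy1 w by apply: lt_le_trans (energy1_ge1 w).
have C0 : 0 < top_bound by apply: lt_le_trans top_bound_ge1.
by rewrite /trace_bound lnM ?posrE ?exprn_gt0 // lnXn // mulr_natl.
Qed.

Lemma node_ln_det_le w m i : inT w -> (0 < i <= m)%N -> (m <= N)%N ->
  `|ln (\det (node X w m i))| <=
    ln n`!%:R + n%:R * ln top_bound + (n * N)%:R * ln (energy1 w).
Proof.
move=> Hw im mN; have [h1 h2] := node_trace_le Hw im mN.
apply: le_trans (posdef_ln_det_le (posdef_node Hw im mN) h1 h2 _) _.
  exact: trace_bound_ge1.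
by rewrite ln_trace_bound natrM mulrDr !addrA mulrA.
Qed.

End Pattern.

Section ComplexNorm.
Variable R : realType.
Local Notation normc := (@ComplexField.Normc.normc R).

Lemma normc_ge0 (z : R[i]) : 0 <= normc z.
Proof. by case: z => a b; rewrite /ComplexField.Normc.normc sqrtr_ge0. Qed.

Lemma normc_real (a : R) : 0 <= a -> normc (Complex a 0) = a.
Proof.
by move=> a0; rewrite /ComplexField.Normc.normc expr0n addr0 sqrtr_sqr ger0_norm.
Qed.

Lemma normc_prod (I : Type) (r : seq I) (P : pred I) (F : I -> R[i]) :
  normc (\prod_(i <- r | P i) F i) = \prod_(i <- r | P i) normc (F i).
Proof.
apply: (big_morph normc); first exact: ComplexField.Normc.normcM.
exact: ComplexField.Normc.normc1.
Qed.

Lemma normc_cpow (x : R) (nu : R[i]) :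
  normc (cpow x nu) = expR (complex.Re nu * ln x).
Proof.
rewrite /cpow /ComplexField.Normc.normc !exprMn -mulrDr cos2Dsin2 mulr1.
by rewrite sqrtr_sqr ger0_norm // expR_ge0.
Qed.

Lemma normc_cpow_le (x : R) (nu : R[i]) :
  normc (cpow x nu) <= expR (`|complex.Re nu| * `|ln x|).
Proof. by rewrite normc_cpow ler_expR -normrM ler_norm. Qed.

Lemma powR_le_expR (x y : R) : 0 < x -> x `^ y <= expR (`|y| * `|ln x|).
Proof. by move=> x0; rewrite /powR gt_eqF // ler_expR -normrM ler_norm. Qed.

End ComplexNorm.

Lemma ln_max1_le (R : realType) (b F : R) : 0 <= b -> 0 <= F ->
  b * ln (Num.max 1 F) <= F / 2 + (1 / 2 + (b + 1) * ln (2 * (b + 1))).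
Proof.
move=> b0 F0; set G := Num.max 1 F; set c := b + 1.
have G1 : 1 <= G by rewrite le_max lexx.
have G0 : 0 < G by apply: lt_le_trans G1.
have GF : G <= 1 + F by rewrite ge_max lerDl F0 /= -subr_ge0 addrK.
have c0 : 0 < c by rewrite /c; lra.
have lnG : ln G = ln (G / (2 * c)) + ln (2 * c).
  rewrite -lnM ?posrE ?divr_gt0 ?mulr_gt0 //.
  by rewrite mulrAC -mulrA divff ?mulr1 // gt_eqF ?mulr_gt0.
have lnGc : c * ln (G / (2 * c)) <= G / 2.
  have -> : G / 2 = c * (G / (2 * c)) by field; rewrite gt_eqF.
  by rewrite ler_pM2l // ltW // ln_sublinear // divr_gt0 ?mulr_gt0.
have : b * ln G <= c * ln G by rewrite ler_wpM2r ?ln_ge0 // /c lerDl.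
rewrite lnG; lra.
Qed.

Section ModerateGrowth.
Variables (R : realType) (N n : nat) (X : 'I_N -> 'M[R]_n).
Hypothesis pdX : forall j, posdef (X j).
Implicit Types f g : (gtcoord N n -> R) -> R.

Definition moderate f := exists a b : R, 0 <= b /\
  forall w, inT w -> 0 <= f w <= expR (a + b * ln (energy1 X w)).

Lemma moderate_decay f : moderate f -> exists c : R, forall w, inT w ->
  f w * expR (- energy X w) <= expR (c - energy X w / 2).
Proof.
move=> [a [b [b0 fb]]]; exists (a + (1 / 2 + (b + 1) * ln (2 * (b + 1)))).
move=> w Hw; have /andP[f0 fle] := fb w Hw.
apply: le_trans (ler_wpM2r (expR_ge0 _) fle) _; rewrite -expRD ler_expR.
have := ln_max1_le b0 (energy_ge0 pdX Hw); rewrite -/(energy1 X w); lra.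
Qed.

Lemma moderate1 : moderate (fun=> 1).
Proof. by exists 0, 0; split=> // w _; rewrite mul0r addr0 expR0 ler01 lexx. Qed.

Lemma moderateM f g : moderate f -> moderate g -> moderate (fun w => f w * g w).
Proof.
move=> [a1 [b1 [b10 fb]]] [a2 [b2 [b20 gb]]].
exists (a1 + a2), (b1 + b2); split=> [|w Hw]; first exact: addr_ge0.
have /andP[f0 fle] := fb w Hw; have /andP[g0 gle] := gb w Hw.
rewrite mulr_ge0 //= (le_trans (ler_pM f0 g0 fle gle)) // -expRD ler_expR.
by rewrite mulrDl; lra.
Qed.

Lemma moderate_prod (I : Type) (r : seq I) (P : pred I)
    (F : I -> (gtcoord N n -> R) -> R) :
  (forall i, P i -> moderate (F i)) ->
  moderate (fun w => \prod_(i <- r | P i) F i w).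
Proof.
move=> FP; elim: r => [|i r IH].
  by under eq_fun do rewrite big_nil; exact: moderate1.
under eq_fun do rewrite big_cons.
by case: (boolP (P i)) => Pi //; apply: moderateM => //; apply: FP.
Qed.

Lemma moderate_ln_det (r : R) f m i : 0 <= r -> (0 < i <= m)%N -> (m <= N)%N ->
    (forall w, inT w ->
       0 <= f w <= expR (r * `|ln (\det (node X w m i))|)) ->
  moderate f.
Proof.
move=> r0 im mN fb.
exists (r * (ln n`!%:R + n%:R * ln (top_bound X))), (r * (n * N)%:R).
split=> [|w Hw]; first exact: mulr_ge0.
have /andP[f0 fle] := fb w Hw; rewrite f0 (le_trans fle) // ler_expR.
rewrite -mulrA -mulrDr ler_wpM2l //; exact: (node_ln_det_le pdX Hw im mN).
Qed.

End ModerateGrowth.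

Section IntegrandBounds.
Variables (R : realType) (N n : nat) (X : 'I_N -> 'M[R]_n) (lam : 'I_N -> R[i]).
Hypothesis pdX : forall j, posdef (X j).
Local Notation normc := (@ComplexField.Normc.normc R).
Local Notation moderate := (moderate X).

Lemma moderate_e_level nu m : (0 < m <= N)%N ->
  moderate (fun w => normc (e_level X w m nu)).
Proof.
move=> /andP[m0 mN]; under eq_fun do rewrite /e_level normc_prod big_seq.
apply: moderate_prod => i /[!mem_index_iota] /andP[i0 im].
apply: (moderate_ln_det pdX (normr_ge0 (complex.Re nu)) (_ : 0 < i <= m)%N mN).
  by rewrite i0.
by move=> w _; rewrite normc_ge0 normc_cpow_le.
Qed.

Lemma moderate_e_lambda : (0 < N)%N ->
  moderate (fun w => normc (e_lambda X lam w)).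
Proof.
move=> N0; under eq_fun do rewrite /e_lambda ComplexField.Normc.normcM normc_prod.
apply: moderateM; first by apply: moderate_e_level; rewrite N0.
under eq_fun do rewrite big_seq.
apply: moderate_prod => m /[!mem_index_iota] /andP[m2 mN].
under eq_fun do rewrite ComplexField.Normc.normcM.
have m1 : (0 < m <= N)%N by rewrite (leq_trans _ m2).
have m1' : (0 < m.-1 <= N)%N.
  by rewrite -ltnS prednK ?m2 ?(leq_trans (leq_pred m)) // ltnW.
by apply: moderateM; apply: moderate_e_level.
Qed.

Lemma moderate_mu_density : moderate (@mu_density R N n).
Proof.
apply: moderate_prod => k _.
case: k => [[a b] hk]; have /andP[ba aN] := hk.
apply: (@moderate_ln_det _ _ _ _ pdX ((n%:R + 1) / 2) _ a.+1 b.+1) => //.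
move=> w Hw; have := posdef_det_gt0 (Hw (exist _ (a, b) hk)).
rewrite -(node_Ymat X) /= => d0.
by rewrite powR_ge0 /= (le_trans (powR_le_expR _ d0)) // normrN ger0_norm.
Qed.

Lemma moderate_coord (c : gtcoord N n) : moderate (fun w => 1 + w c ^+ 2).
Proof.
exists (ln 2 + 2 * ln (top_bound X)), (2 * N%:R); split=> [|w Hw].
  by rewrite mulr_ge0.
have M1 := trace_bound_ge1 pdX w.
have M0 : 0 < trace_bound X w by apply: lt_le_trans M1.
have wM : w c ^+ 2 <= trace_bound X w ^+ 2.
  rewrite -real_normK ?num_real //; apply: lerXn2r;
    rewrite ?nnegrE ?normr_ge0 ?(ltW M0) //.
  exact: coord_le.
have -> : ln 2 + 2 * ln (top_bound X) + 2 * N%:R * ln (energy1 X w) =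
          ln 2 + 2 * ln (trace_bound X w) by rewrite (ln_trace_bound pdX); ring.
rewrite addr_ge0 ?sqr_ge0 //= expRD mulrC expRM_natl !lnK ?posrE //.
have : 1 <= trace_bound X w ^+ 2 by rewrite exprn_ege1.
lra.
Qed.

Lemma normc_gt_integrand w :
  normc (gt_integrand X lam w) = normc (e_lambda X lam w) * expR (- energy X w).
Proof. by rewrite ComplexField.Normc.normcM normc_real ?expR_ge0. Qed.

Lemma gt_integrand_decay : (0 < N)%N -> exists c : R, forall w, inT w ->
  normc (gt_integrand X lam w) <= expR (c - energy X w / 2).
Proof.
move=> N0; have [c dec] := moderate_decay pdX (moderate_e_lambda N0).
by exists c => w Hw; rewrite normc_gt_integrand dec.
Qed.

Lemma abs_integrand_ge0 w : 0 <= abs_integrand X lam w.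
Proof.
rewrite /abs_integrand; case: ifP => // _.
by rewrite mulr_ge0 ?normc_ge0 // prodr_ge0 // => k _; apply: powR_ge0.
Qed.

Lemma abs_integrand_weighted_le : (0 < N)%N -> exists C : R, forall w,
  abs_integrand X lam w * \prod_(c : gtcoord N n) (1 + w c ^+ 2) <= C.
Proof.
move=> N0; have coords := @moderate_prod _ _ _ X _ (index_enum _) xpredT _
  (fun c _ => moderate_coord c).
have [C dec] := moderate_decay pdX
  (moderateM (moderateM (moderate_e_lambda N0) moderate_mu_density) coords).
exists (expR C) => w; rewrite /abs_integrand.
case: asboolP => [Hw|_]; last by rewrite mul0r expR_ge0.
rewrite normc_gt_integrand -!mulrA [expR _ * _]mulrC.
rewrite -[_ * _ * expR _]mulrA !mulrA.
apply: le_trans (dec w Hw) _; rewrite ler_expR gerBl divr_ge0 //.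
exact: (energy_ge0 pdX Hw).
Qed.

End IntegrandBounds.

Local Open Scope classical_set_scope.

Section BoundedPatterns.
Variables (R : realType) (N n : nat).

(* The second condition says (Y^m_i)^-1 <= M, which keeps the set away from
   the boundary of T(X). *)
Definition bounded_patterns (M : R) : set (gtspace R N n) :=
  [set w | (forall c, `|w c| <= M) /\
           forall k (x : 'rV[R]_n), sqnorm x <= M * bform (Ymat w k) x x].

Lemma continuous_coord (c : gtcoord N n) :
  continuous (fun w : gtspace R N n => w c).
Proof. exact: (@proj_continuous _ (fun _ => (R : topologicalType)) c). Qed.

Lemma continuous_bform_Ymat k (x : 'rV[R]_n) :
  continuous (fun w : gtspace R N n => bform (Ymat w k) x x).
Proof.
have -> : (fun w : gtspace R N n => bform (Ymat w k) x x) =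
    fun w => \sum_j \sum_i x 0 i * x 0 j * w (k, sidx i j).
  apply: funext => w; rewrite /bform mxE; apply: eq_bigr => j _.
  by rewrite mxE mulr_suml; apply: eq_bigr => i _; rewrite !mxE; ring.
apply: continuous_big => [|j _]; first exact: add_continuous.
apply: continuous_big => [|i _ w]; first exact: add_continuous.
apply: (@continuousM _ _ (cst (x 0 i * x 0 j))
  (fun w : gtspace R N n => w (k, sidx i j)) w).
  exact: cst_continuous.
exact: continuous_coord.
Qed.

Lemma closed_bounded_patterns M : closed (bounded_patterns M).
Proof.
have -> : bounded_patterns M =
    \bigcap_c [set w | `|w c| <= M] `&`
    \bigcap_k \bigcap_x [set w | sqnorm x <= M * bform (Ymat w k) x x].
  apply/seteqP; split=> w /= [Hc Hk]; split.
  - by move=> c _; apply: Hc.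
  - by move=> k _ x _; apply: Hk.
  - by move=> c; apply: (Hc c I).
  - by move=> k x; apply: (Hk k I x I).
apply: closedI; apply: closed_bigI => c _.
  have : continuous (fun w : gtspace R N n => `|w c|).
    move=> w; apply: continuous_comp; first exact: continuous_coord.
    exact: norm_continuous.
  by move/continuous_closedP/(_ _ (@closed_le _ M)).
apply: closed_bigI => x _.
have : continuous (fun w : gtspace R N n => M * bform (Ymat w c) x x).
  move=> w; apply: (@continuousM _ _ (cst M)
    (fun w : gtspace R N n => bform (Ymat w c) x x) w).
    exact: cst_continuous.
  exact: continuous_bform_Ymat.
by move/continuous_closedP/(_ _ (@closed_ge _ (sqnorm x))).
Qed.

Lemma compact_bounded_patterns M : compact (bounded_patterns M).
Proof.
have box : compact [set w : gtspace R N n | forall c, `[-M, M] (w c)].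
  exact: (@tychonoff _ (fun _ => (R : topologicalType)) (fun _ => `[-M, M])
    (fun _ => @segment_compact R (-M) M)).
apply: subclosed_compact (@closed_bounded_patterns M) box _.
by move=> w [Hc _] c /=; have := Hc c; rewrite in_itv /= ler_norml.
Qed.

Lemma bounded_patterns_inT M : 0 < M -> bounded_patterns M `<=` [set w | inT w].
Proof.
move=> M0 w [_ Hk] k; split=> [|x xn]; first exact: trmx_Ymat.
have := Hk k x; have := sqnorm_gt0 xn => x0 h.
by have := lt_le_trans x0 h; rewrite pmulr_rgt0.
Qed.

Lemma bounded_patterns_void M w : N = 0%N -> bounded_patterns M w.
Proof.
move=> N0; have LvIdx0 (k : LvIdx N) : False by have := LvIdx_gt1 k; rewrite N0.
by split=> [c|k]; [case: (LvIdx0 c.1) | case: (LvIdx0 k)].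
Qed.

Variables (X : 'I_N -> 'M[R]_n) (lam : 'I_N -> R[i]).
Hypothesis pdX : forall j, posdef (X j).

Lemma bounded_patterns_energy1 w H : inT w -> 1 <= H -> energy1 X w <= H ->
  bounded_patterns (top_bound X * H ^+ N) w.
Proof.
move=> Hw H1 GH.
have MH : trace_bound X w <= top_bound X * H ^+ N.
  apply: ler_wpM2l; first exact: le_trans ler01 (top_bound_ge1 pdX).
  apply: lerXn2r; rewrite ?nnegrE ?(le_trans ler01 H1) //.
  exact: le_trans ler01 (energy1_ge1 X w).
split=> [c|k x]; first exact: le_trans (coord_le pdX c Hw) MH.
have pY := Hw k; have uY := posdef_unitmx pY.
have := sqnorm_le_trace_invform x (posdef_psdmx (posdef_invmx pY)).
rewrite invmxK unitmx_inv => /(_ uY) /le_trans; apply.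
apply: ler_wpM2r; first by case: (posdef_psdmx pY).
exact: le_trans (Ymat_trace_le pdX k Hw).2 MH.
Qed.

Lemma gt_integrand_vanishes_at_boundary (eps : R) : 0 < eps ->
  exists K : set (gtspace R N n),
    [/\ compact K, K `<=` [set w | inT w] &
        forall w, inT w -> ~ K w ->
          ComplexField.Normc.normc (gt_integrand X lam w) < eps].
Proof.
move=> eps0; have [N0|N_gt0] := posnP N.
  exists (bounded_patterns 1); split; first exact: compact_bounded_patterns.
    exact: bounded_patterns_inT.
  by move=> w _ []; apply: bounded_patterns_void.
have [c dec] := gt_integrand_decay lam pdX N_gt0.
pose H := 1 + Num.max 0 (2 * (c - ln eps)).
have H1 : 1 <= H by rewrite lerDl le_max lexx.
have HM : 0 < top_bound X * H ^+ N.
  by rewrite mulr_gt0 ?exprn_gt0 ?(lt_le_trans ltr01) ?top_bound_ge1.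
exists (bounded_patterns (top_bound X * H ^+ N)); split.
- exact: compact_bounded_patterns.
- exact: bounded_patterns_inT.
move=> w Hw notK.
have HF : H < energy X w.
  have HG : H < energy1 X w.
    by rewrite ltNge; apply/negP => GH; apply/notK/bounded_patterns_energy1.
  by move: HG; rewrite lt_max ltNge H1.
apply: le_lt_trans (dec w Hw) _; rewrite -[ltRHS]lnK ?posrE // ltr_expR.
have : 2 * (c - ln eps) <= Num.max 0 (2 * (c - ln eps)).
  by rewrite le_max lexx orbT.
rewrite /H in HF; lra.
Qed.

End BoundedPatterns.

Section IteratedIntegral.
Variable R : realType.
Local Notation mu := (@lebesgue_measure R).
Local Open Scope ereal_scope.

(* No measurability is needed: the integral is built from suprema over simple
   functions below f^+ and f^-, and these parts move the right way as f grows. *)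
Lemma le_integralT (f g : R -> \bar R) : (forall x, f x <= g x) ->
  \int[mu]_(x in [set: R]) f x <= \int[mu]_(x in [set: R]) g x.
Proof.
move=> fg; rewrite /integral !patch_setT; apply: leeB.
  apply: ereal_sup_le => _ [h hf <-]; exists h => //= x.
  by apply: le_trans (hf x) _; apply: (@funepos_le _ _ setT); rewrite ?in_setT.
apply: ereal_sup_le => _ [h hf <-]; exists h => //= x.
by apply: le_trans (hf x) _; apply: (@funeneg_le _ _ setT); rewrite ?in_setT.
Qed.

Lemma iterint_le (J : eqType) (s : seq J) (f g : (J -> R) -> \bar R) :
  (forall v, f v <= g v) -> forall v, iterint s f v <= iterint s g v.
Proof.
move=> fg; elim: s => [|j s IH] v //=.
by apply: le_integralT => x; apply: IH.
Qed.

Lemma oneDsqrV_ge0 (x : R) : (0 <= (oneDsqr x)^-1)%R.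
Proof. by rewrite invr_ge0 (le_trans ler01) ?oneDsqr_ge1. Qed.

Lemma integralT_oneDsqrV :
  \int[mu]_(x in [set: R]) ((oneDsqr x)^-1)%:E = pi%:E.
Proof.
rewrite ge0_symfun_integralT; last first.
- by move=> x /=; rewrite /oneDsqr sqrrN.
- exact: continuous_oneDsqrV.
- exact: oneDsqrV_ge0.
have -> : [set x : R | (0 <= x)%R] = `[0%R, +oo[%classic.
  by apply/seteqP; split=> x /=; rewrite in_itv /= andbT.
by rewrite integral0y_oneDsqr -EFinM; congr EFin; field.
Qed.

Lemma iterint_prod_oneDsqrV (J : finType) (s : seq J) (C : R) v : (0 <= C)%R ->
  uniq s -> iterint s (fun v => (C * \prod_(c : J) (oneDsqr (v c))^-1)%:E) v =
    (C * pi ^+ size s * \prod_(c | c \notin s) (oneDsqr (v c))^-1)%:E.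
Proof.
move=> C0; elim: s v => [|j s IH] v /=.
  by move=> _; rewrite expr0 mulr1; congr EFin; congr (_ * _); apply: eq_bigl.
move=> /andP[js us]; under eq_integral do rewrite IH //.
set K := (C * pi ^+ size s * \prod_(c | c \notin j :: s) (oneDsqr (v c))^-1)%R.
have K0 : (0 <= K)%R.
  by rewrite /K !mulr_ge0 ?exprn_ge0 ?pi_ge0 // prodr_ge0 // => c _;
    apply: oneDsqrV_ge0.
transitivity (\int[mu]_(x in [set: R]) (K%:E * ((oneDsqr x)^-1)%:E)).
  apply: eq_integral => x _; rewrite -EFinM; congr EFin.
  rewrite (bigD1 j) /=; last by rewrite js.
  have -> : (\prod_(c | (c \notin s) && (c != j))
               (oneDsqr (if c == j then x else v c))^-1 =
             \prod_(c | c \notin j :: s) (oneDsqr (v c))^-1)%R.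
    apply: eq_big => [c|c /andP[_ /negbTE-> //]].
    by rewrite inE negb_or andbC eq_sym.
  by rewrite eqxx /K; ring.
rewrite ge0_integralZl_EFin //.
- by rewrite integralT_oneDsqrV -EFinM; congr EFin; rewrite /K exprS; ring.
- apply/measurable_EFinP; apply: continuous_measurable_fun.
  exact: continuous_oneDsqrV.
Qed.

Lemma lebesgue_integral_fin_dominated (J : finType) (f : (J -> R) -> R) (C : R) :
    (forall v, f v <= C * \prod_(c : J) (oneDsqr (v c))^-1)%R -> (0 <= C)%R ->
  lebesgue_integral_fin (fun v => (f v)%:E) < +oo.
Proof.
move=> fC C0; rewrite /lebesgue_integral_fin.
have dom v : (f v)%:E <= (C * \prod_(c : J) (oneDsqr (v c))^-1)%:E.
  by rewrite lee_fin.
apply: le_lt_trans (iterint_le _ dom _) _.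
by rewrite iterint_prod_oneDsqrV ?enum_uniq // ltry.
Qed.

End IteratedIntegral.

Lemma lebesgue_integral_fin_card0 (R : realType) (J : finType)
    (f : (J -> R) -> \bar R) :
  #|J| = 0%N -> lebesgue_integral_fin f = f (fun=> 0).
Proof. by rewrite cardT => /size0nil; rewrite /lebesgue_integral_fin => ->. Qed.

Lemma gt_integral_finite (R : realType) (N n : nat) (X : 'I_N -> 'M[R]_n)
    (lam : 'I_N -> R[i]) : (forall j, posdef (X j)) ->
  (lebesgue_integral_fin (fun w : gtcoord N n -> R =>
     (abs_integrand X lam w)%:E) < +oo)%E.
Proof.
move=> pdX; have [N0|N_gt0] := posnP N.
  rewrite lebesgue_integral_fin_card0 ?ltry // card_prod.
  rewrite (@eq_card0 _ {: LvIdx N}) ?mul0n // => k.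
  by have := LvIdx_gt1 k; rewrite [in P in P -> _]N0.
have [C bound] := abs_integrand_weighted_le lam pdX N_gt0.
apply: (@lebesgue_integral_fin_dominated _ _ _ C) => [w|].
  have P0 : 0 < \prod_(c : gtcoord N n) oneDsqr (w c).
    by rewrite prodr_gt0 // => c _; rewrite ltr_pwDl ?sqr_ge0.
  by rewrite prodfV ler_pdivlMr //; apply: bound.
apply: le_trans _ (bound (fun=> 0)).
by rewrite mulr_ge0 ?abs_integrand_ge0 // prodr_ge0.
Qed.

Unset Implicit Arguments.

Theorem proposition7p1 (R : realType) (N n : nat)
    (X : 'I_N -> 'M[R]_n) (lam : 'I_N -> R[i]) :
  (forall j : 'I_N, posdef (X j)) ->
  (* (i) the integral defining psi_lambda(X) converges (absolutely) *)
  (lebesgue_integral_fin (fun w : gtcoord N n -> R =>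
       (abs_integrand X lam w)%:E) < +oo)%E /\
  (* (ii) the integrand vanishes as Y -> boundary of T(X) *)
  (forall eps : R, 0 < eps ->
     exists K : set (gtspace R N n),
       [/\ compact K, K `<=` [set w | inT w] &
           forall w, inT w -> ~ K w ->
             ComplexField.Normc.normc (gt_integrand X lam w) < eps]).
Proof.
move=> pdX; split; first exact: gt_integral_finite.
exact: gt_integrand_vanishes_at_boundary.
Qed.
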